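(* Let $A$ be a homothetically shrinking soliton centered at $(x_0,t_0)$ such that $i_VF=0$ for some non-zero vector $V\in\mathbb R^n$. Then $A$ descends to the hyperplane perpendicular to $V$: in an exponential gauge (one with $(x-x_0)^jA_j(x)=0$), one has $V^jA_j\equiv0$ and $A_j(x+cV)=A_j(x)$ for all $x\in\mathbb R^n$, $c\in\mathbb R$ and all $j$, so that $A$ is a connection on a trivial $G$-vector bundle over the hyperplane $V^\perp$ pulled back along the orthogonal projection.
   Context: $G\subset SO(r)$ compact with Lie algebra $\mathfrak g$; $E$ the trivial $G$-vector bundle over $\mathbb R^n$. Connection $A=A_idx^i$, curvature $F_{ij}=\partial_iA_j-\partial_jA_i+[A_i,A_j]$; repeated indices summed; $\nabla_pT=\partial_pT+[A_p,T]$; $i_VF=V^pF_{pj}dx^j$. A homothetically shrinking soliton centered at $(x_0,t_0)$ satisfies $\nabla_pF_{pj}-\frac1{2t_0}(x-x_0)^pF_{pj}=0$ for all $j$. *)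

From HB Require Import structures.
From mathcomp Require Import all_boot all_order all_algebra.
From mathcomp Require Import all_classical all_reals all_analysis.
Set Implicit Arguments. Unset Strict Implicit. Unset Printing Implicit Defensive.
Import Order.TTheory GRing.Theory Num.Theory.
Import numFieldNormedType.Exports.
Local Open Scope ring_scope.
Local Open Scope classical_set_scope.

Definition xcoord {R : realType} {n : nat} (x : 'rV[R]_n) (j : 'I_n) : R := x ord0 j.

Definition ebasis {R : realType} {n : nat} (j : 'I_n) : 'rV[R]_n := delta_mx ord0 j.

Definition pd {R : realType} {n r : nat} (j : 'I_n) (f : 'rV[R]_n -> 'M[R]_r)
  (x : 'rV[R]_n) : 'M[R]_r := derive f x (ebasis j).

Fixpoint iter_pd {R : realType} {n r : nat} (js : seq 'I_n)
  (f : 'rV[R]_n -> 'M[R]_r) : 'rV[R]_n -> 'M[R]_r :=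
  match js with
  | [::] => f
  | j :: js' => pd j (iter_pd js' f)
  end.

Definition smooth {R : realType} {n r : nat} (f : 'rV[R]_n -> 'M[R]_r) : Prop :=
  forall (js : seq 'I_n) (x : 'rV[R]_n), differentiable (iter_pd js f) x.

Definition lie {R : realType} {r : nat} (X Y : 'M[R]_r) : 'M[R]_r :=
  X *m Y - Y *m X.

(* G is a compact (i.e. closed) subgroup of SO(r) *)
Definition closed_subgroup_SO {R : realType} (r : nat) (G : set 'M[R]_r) : Prop :=
  [/\ closed G, G 1%:M,
      (forall g h, G g -> G h -> G (g *m h)),
      (forall g, G g -> G (invmx g)) &
      (forall g, G g -> g *m g^T = 1%:M /\ \det g = 1)].

Definition lie_algebra {R : realType} {r : nat} (G : set 'M[R]_r) : set 'M[R]_r :=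
  [set X | exists gam : R -> 'M[R]_r,
     [/\ (forall t, G (gam t)), gam 0 = 1%:M,
         (forall t, differentiable gam t) & derive gam 0 1 = X]].

(* A connection A = A_i dx^i on the trivial bundle over R^n: A i : R^n -> M_r *)
Definition connection (R : realType) (n r : nat) := 'I_n -> 'rV[R]_n -> 'M[R]_r.

Definition curvature {R : realType} {n r : nat} (A : connection R n r)
  (i j : 'I_n) (x : 'rV[R]_n) : 'M[R]_r :=
  pd i (A j) x - pd j (A i) x + lie (A i x) (A j x).

Definition covd {R : realType} {n r : nat} (A : connection R n r) (p : 'I_n)
  (T : 'rV[R]_n -> 'M[R]_r) (x : 'rV[R]_n) : 'M[R]_r :=
  pd p T x + lie (A p x) (T x).

Definition shrinking_soliton {R : realType} {n r : nat} (A : connection R n r)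
  (x0 : 'rV[R]_n) (t0 : R) : Prop :=
  forall (j : 'I_n) (x : 'rV[R]_n),
    \sum_(p < n) covd A p (curvature A p j) x
    - (2 * t0)^-1 *: \sum_(p < n) xcoord (x - x0) p *: curvature A p j x = 0.

Definition interior_curv {R : realType} {n r : nat} (A : connection R n r)
  (V : 'rV[R]_n) (j : 'I_n) (x : 'rV[R]_n) : 'M[R]_r :=
  \sum_(p < n) xcoord V p *: curvature A p j x.

Definition exponential_gauge {R : realType} {n r : nat} (A : connection R n r)
  (x0 : 'rV[R]_n) : Prop :=
  forall x, \sum_(j < n) xcoord (x - x0) j *: A j x = 0.

From HB Require Import structures.
From mathcomp Require Import all_boot all_order all_algebra.
From mathcomp Require Import all_classical all_reals all_analysis.
Set Implicit Arguments. Unset Strict Implicit. Unset Printing Implicit Defensive.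
Import Order.TTheory GRing.Theory Num.Theory.
Import numFieldNormedType.Exports.
Local Open Scope ring_scope.
Local Open Scope classical_set_scope.

(* Put W := V^j A_j. Differentiating the exponential gauge condition
   (x - x0)^j A_j = 0 in the direction V gives (x - x0)^j d_V A_j = - W, and
   i_V F = 0 reads d_V A_j - d_j W + [W, A_j] = 0. Contracting the latter with
   (x - x0)^j, the commutator term vanishes by the gauge condition and we get
   the Euler equation W + (x - x0)^j d_j W = 0, whose only differentiable
   solution is W = 0. Then i_V F = 0 reduces to d_V A_j = 0, so A_j is constant
   along the lines x + c V. *)

Section DeriveAlongLine.
Variables (R : numFieldType) (V W : normedModType R).
Implicit Types (f : V -> W) (x y : V) (s : R).

Lemma derive_line f x y s :
  'D_1 (fun t : R => f (x + t *: y)) s = 'D_y f (x + s *: y).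
Proof.
rewrite /derive /=; apply: (congr1 (fun g => lim (g @ 0^'))).
by apply/funext => h /=; rewrite scaler1 scalerDl addrCA addrC.
Qed.

Lemma derivable_line f x y s :
  derivable (fun t : R => f (x + t *: y)) s 1 = derivable f (x + s *: y) y.
Proof.
rewrite /derivable /=; apply: (congr1 (fun g => cvg (g @ 0^'))).
by apply/funext => h /=; rewrite scaler1 scalerDl addrCA addrC.
Qed.

End DeriveAlongLine.

Section MatrixCalculus.
Variables (R : realType) (n r : nat).
Implicit Types (F : 'rV[R]_n -> 'M[R]_r) (x y z v : 'rV[R]_n).

Lemma derive_pd F z v : differentiable F z ->
  'D_v F z = \sum_(i < n) xcoord v i *: pd i F z.
Proof.
move=> dF; rewrite /pd deriveE // {1}(row_sum_delta v) linear_sum.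
by apply: eq_bigr => i _; rewrite linearZ /= /ebasis deriveE.
Qed.

Lemma derive_dirZ F z k v : differentiable F z -> 'D_(k *: v) F z = k *: 'D_v F z.
Proof. by move=> dF; rewrite !deriveE // linearZ. Qed.

Lemma is_deriveZfun (c : 'rV[R]_n -> R) F z v :
  derivable c z v -> derivable F z v ->
  is_derive z v (fun t => c t *: F t) (c z *: 'D_v F z + 'D_v c z *: F z).
Proof.
move=> dc dF.
have entryE i k : (fun t => (c t *: F t) i k) = c * (fun t => F t i k).
  by apply/funext => t; rewrite mxE.
have dFe i k : derivable (fun t => F t i k) z v := proj1 (derivable_mxP _ _ _) dF i k.
have dcF : derivable (fun t => c t *: F t) z v.
  by apply/derivable_mxP => i k; rewrite entryE; apply: derivableM.
apply: DeriveDef => //; apply/matrixP => i k.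
rewrite (derive_mx dcF) (derive_mx dF) !mxE entryE deriveM //.
by rewrite /GRing.scale /= [F z i k * _]mulrC.
Qed.

Lemma is_derive_xcoordB x0 z v j :
  is_derive z v (fun t => xcoord (t - x0) j) (xcoord v j).
Proof.
have did : derivable (@id 'rV[R]_n) z v by exact: derivable_id.
have dcoord : derivable (fun t : 'rV[R]_n => t ord0 j) z v.
  exact: (proj1 (derivable_mxP _ _ _) did).
have -> : (fun t => xcoord (t - x0) j) = (fun t => t ord0 j) - cst (x0 ord0 j).
  by apply/funext => t; rewrite /xcoord !mxE.
apply: DeriveDef; first by apply: derivableB => //; exact: derivable_cst.
rewrite deriveB //; last exact: derivable_cst.
have /matrixP/(_ ord0 j) := derive_mx did; rewrite derive_id mxE => <-.
by rewrite derive_cst subr0.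
Qed.

Lemma is_derive_line_entry F x y s i k : derivable F (x + s *: y) y ->
  is_derive s 1 (fun t : R => F (x + t *: y) i k) ('D_y F (x + s *: y) i k).
Proof.
rewrite -derivable_line => dF; apply: DeriveDef.
  exact: (proj1 (derivable_mxP _ _ _) dF).
by rewrite -derive_line (derive_mx dF) mxE.
Qed.

Lemma cst_along_line F x y : (forall s, derivable F (x + s *: y) y) ->
  (forall s, 'D_y F (x + s *: y) = 0) -> forall c, F (x + c *: y) = F x.
Proof.
move=> dF dF0 c; apply/matrixP => i k.
have -> : F x i k = F (x + 0 *: y) i k by rewrite scale0r addr0.
apply: (@is_derive_0_is_cst R (fun t => F (x + t *: y) i k)) => s.
by have := is_derive_line_entry i k (dF s); rewrite dF0 mxE.
Qed.

(* A function with [F + 'D_(z - x) F = 0] is homogeneous of degree -1 about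
   [x]; since [s * F (x + s (z - x))] then has zero derivative, it vanishes. *)
Lemma euler_eq0 F x : (forall z, differentiable F z) ->
  (forall z, F z + 'D_(z - x) F z = 0) -> forall z, F z = 0.
Proof.
move=> dF hF z; apply/matrixP => i k; set y := z - x.
suff : 1 * F (x + 1 *: y) i k = 0 * F (x + 0 *: y) i k.
  by rewrite mul0r scale1r mul1r addrC subrK mxE.
apply: (@is_derive_0_is_cst R (fun s => s * F (x + s *: y) i k)) => s.
have [dFs DFs] := is_derive_line_entry i k (diff_derivable (v := y) (dF (x + s *: y))).
have -> : (fun s => s * F (x + s *: y) i k) = id * (fun s => F (x + s *: y) i k)
  by [].
apply: DeriveDef; first exact: derivableM.
rewrite deriveM // DFs derive_id /=.
have := hF (x + s *: y); rewrite [x + _]addrC addrK derive_dirZ //.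
move/matrixP/(_ i k); rewrite !mxE => <-.
by rewrite /GRing.scale /= mulr1 [RHS]addrC.
Qed.

Lemma lie_suml m (a : 'I_m -> R) (X : 'I_m -> 'M[R]_r) M :
  lie (\sum_(i < m) a i *: X i) M = \sum_(i < m) a i *: lie (X i) M.
Proof.
rewrite /lie mulmx_suml mulmx_sumr -sumrB; apply: eq_bigr => i _.
by rewrite -scalemxAl -scalemxAr scalerBr.
Qed.

Lemma lie_sumr m (a : 'I_m -> R) (X : 'I_m -> 'M[R]_r) M :
  lie M (\sum_(i < m) a i *: X i) = \sum_(i < m) a i *: lie M (X i).
Proof.
rewrite /lie mulmx_suml mulmx_sumr -sumrB; apply: eq_bigr => i _.
by rewrite -scalemxAl -scalemxAr scalerBr.
Qed.

End MatrixCalculus.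

Section InteriorConnection.
Variables (R : realType) (n r : nat) (A : connection R n r).
Hypothesis dA : forall j z, differentiable (A j) z.

Definition interior_conn (V z : 'rV[R]_n) : 'M[R]_r :=
  \sum_(j < n) xcoord V j *: A j z.

Lemma interior_connE V : interior_conn V = \sum_(j < n) (fun z => xcoord V j *: A j z).
Proof. by apply/funext => z; rewrite fct_sumE. Qed.

Lemma differentiable_interior_conn V z : differentiable (interior_conn V) z.
Proof.
rewrite interior_connE; apply: differentiable_sum => j.
exact: differentiableZ.
Qed.

Lemma derive_interior_conn V z v :
  'D_v (interior_conn V) z = \sum_(j < n) xcoord V j *: 'D_v (A j) z.
Proof.
rewrite interior_connE derive_sum; last first.
  by move=> j; apply: derivableZ; exact: diff_derivable.
by apply: eq_bigr => j _; rewrite deriveZ //; exact: diff_derivable.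
Qed.

Lemma interior_curvE V j z : interior_curv A V j z =
  'D_V (A j) z - pd j (interior_conn V) z + lie (interior_conn V z) (A j z).
Proof.
rewrite /interior_curv /curvature (derive_pd V (dA j z)) /pd.
rewrite derive_interior_conn lie_suml -sumrB -big_split /=.
by apply: eq_bigr => p _; rewrite !scalerDr scalerN.
Qed.

Variable x0 : 'rV[R]_n.
Hypothesis gauge : exponential_gauge A x0.

Lemma gauge_radial_derive z v :
  \sum_(j < n) xcoord (z - x0) j *: 'D_v (A j) z = - interior_conn v z.
Proof.
have is_derive_term j : is_derive z v (fun t => xcoord (t - x0) j *: A j t)
    (xcoord (z - x0) j *: 'D_v (A j) z + xcoord v j *: A j z).
  have [dc <-] := is_derive_xcoordB x0 z v j.
  by apply: is_deriveZfun => //; exact: diff_derivable.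
have derive_term j : 'D_v (fun t => xcoord (t - x0) j *: A j t) z =
    xcoord (z - x0) j *: 'D_v (A j) z + xcoord v j *: A j z.
  by case: (is_derive_term j).
have gauge_fun : \sum_(j < n) (fun t => xcoord (t - x0) j *: A j t) = cst 0.
  by apply/funext => t; rewrite fct_sumE; exact: gauge.
have := derive_cst (0 : 'M[R]_r) z v; rewrite -gauge_fun derive_sum; last first.
  by move=> j; case: (is_derive_term j).
under eq_bigr do rewrite derive_term.
by rewrite big_split /= => /eqP; rewrite addr_eq0 => /eqP ->.
Qed.

Lemma interior_conn_euler V : (forall j z, interior_curv A V j z = 0) ->
  forall z, interior_conn V z + 'D_(z - x0) (interior_conn V) z = 0.
Proof.
move=> iVF0 z.
have radial : \sum_(j < n) xcoord (z - x0) j *: interior_curv A V j z = 0.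
  by rewrite big1 // => j _; rewrite iVF0 scaler0.
apply: oppr_inj; rewrite oppr0 -{}radial.
under eq_bigr do rewrite interior_curvE scalerDr scalerBr.
rewrite !big_split /= sumrN gauge_radial_derive.
rewrite -(lie_sumr (fun j => xcoord (z - x0) j) (fun j => A j z)) gauge.
rewrite (derive_pd _ (differentiable_interior_conn V z)) /lie mulmx0 mul0mx.
by rewrite subrr addr0 opprD.
Qed.

Lemma interior_conn_eq0 V : (forall j z, interior_curv A V j z = 0) ->
  forall z, interior_conn V z = 0.
Proof.
move=> iVF0; apply: (euler_eq0 (x := x0)); first exact: differentiable_interior_conn.
exact: interior_conn_euler.
Qed.

Lemma conn_translation_invariant V : (forall j z, interior_curv A V j z = 0) ->
  forall x c j, A j (x + c *: V) = A j x.
Proof.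
move=> iVF0 x c j; apply: cst_along_line => [s|s]; first exact: diff_derivable.
have := interior_curvE V j (x + s *: V); rewrite iVF0.
have -> : interior_conn V = cst 0 by apply/funext => t; exact: interior_conn_eq0.
rewrite /pd derive_cst /= /lie mul0mx mulmx0 !subr0 addr0.
by move->.
Qed.

End InteriorConnection.

Theorem mainTheorem12 (R : realType) (n r : nat) (G : set 'M[R]_r)
  (A : connection R n r) (x0 : 'rV[R]_n) (t0 : R) (V : 'rV[R]_n) :
  closed_subgroup_SO G ->
  (forall j x, lie_algebra G (A j x)) ->
  (forall j, smooth (A j)) ->
  0 < t0 ->
  shrinking_soliton A x0 t0 ->
  V != 0 ->
  (forall j x, interior_curv A V j x = 0) ->
  exponential_gauge A x0 ->
  (forall x, \sum_(j < n) xcoord V j *: A j x = 0) /\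
  (forall (x : 'rV[R]_n) (c : R) (j : 'I_n), A j (x + c *: V) = A j x).
Proof.
move=> _ _ smoothA _ _ _ iVF0 gauge.
have dA j z : differentiable (A j) z := smoothA j [::] z.
split; last exact (conn_translation_invariant dA gauge iVF0).
exact: (interior_conn_eq0 dA gauge iVF0).
Qed.
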